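(* For every $r>0$ and $\mu\in P_{n-1}$, $d\pi_{(\mu,r)}(\mathcal L)=-r^2\,\mathrm{Id}$.
   Context: On $\mathbb C^n$, $\langle x,y\rangle=\sum x_j\overline{y_j}$, $(x,y)=\mathrm{Re}\langle x,y\rangle$, $\omega=\mathrm{Im}\langle\cdot,\cdot\rangle$. $\mathbb H_n=\mathbb C^n\times\mathbb R$ with $(z,t)(z',t')=(z+z',t+t'-\frac12\omega(z,z'))$; $G_n=U(n)\ltimes\mathbb H_n$ with $(A,z,t)(B,z',t')=(AB,z+Az',t+t'-\frac12\omega(z,Az'))$. $P_{n-1}$ is the set of $\mu\in\mathbb Z^{n-1}$ with $\mu_1\ge\dots\ge\mu_{n-1}$; $\rho_\mu$ is the irreducible representation of $U(n-1)$ with highest weight $\mu$, $U(n-1)\subset U(n)$ as $\mathrm{diag}(B,1)$. $v_r=(0,\dots,0,r)^T$, $\chi_r(z,t)=e^{-i(v_r,z)}$, $\pi_{(\mu,r)}=\mathrm{Ind}_{U(n-1)\ltimes\mathbb H_n}^{G_n}(\rho_\mu\otimes\chi_r)$, realized so that $\pi_{(\mu,r)}(A,z,t)\xi(B)=e^{-i(Bv_r,z)}\xi(A^{-1}B)$. The left invariant vector fields on $\mathbb H_n$ are $Z_j=2\frac{\partial}{\partial\bar z_j}+\frac{iz_j}2\frac\partial{\partial t}$, $\overline{Z_j}=2\frac\partial{\partial z_j}-\frac{i\bar z_j}2\frac\partial{\partial t}$, and the sub-Laplacian is $\mathcal L=\frac12\sum_{j=1}^n(Z_j\overline{Z_j}+\overline{Z_j}Z_j)$;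 $d\pi$ denotes the derived representation of the universal enveloping algebra on smooth vectors. *)

From HB Require Import structures.
From mathcomp Require Import all_boot all_order all_algebra.
From mathcomp Require Import complex.
From mathcomp Require Import all_classical all_reals all_analysis.
Set Implicit Arguments. Unset Strict Implicit. Unset Printing Implicit Defensive.
Import Order.TTheory GRing.Theory Num.Theory.
Local Open Scope ring_scope.

Section HeisenbergMotion.
Variable R : realType.
Local Notation C := R[i].

Definition iC : C := Complex 0 1.
Definition expi (s : R) : C := Complex (cos s) (sin s).

(* <x,y> = sum x_j conj(y_j),  (x,y) = Re <x,y>,  omega = Im <x,y>  on C^n
   (vectors of C^n are column vectors 'cV_n) *)
Definition hdot n (x y : 'cV[C]_n) : C := \sum_(j < n) x j 0 * conjc (y j 0).
Definition rdot n (x y : 'cV[C]_n) : R := complex.Re (hdot x y).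
Definition omega n (x y : 'cV[C]_n) : R := complex.Im (hdot x y).

Definition adjmx n (A : 'M[C]_n) : 'M[C]_n := map_mx conjc A^T.
Definition unitary n (A : 'M[C]_n) : Prop := adjmx A *m A = 1.

(* U(m) inside U(m+1) as diag(B,1) *)
Definition embed m (B : 'M[C]_m) : 'M[C]_m.+1 :=
  \matrix_(i, j) match unlift ord_max i, unlift ord_max j with
                 | Some i', Some j' => B i' j'
                 | None, None => 1
                 | _, _ => 0 end.

Definition vr m (r : R) : 'cV[C]_m.+1 :=
  \col_j (if j == ord_max then complex.real_complex R r else 0).

(* G_n = U(n) |x H_n, elements (A, z, t);  group law of the paper *)
Definition Gmul n (g h : 'M[C]_n * 'cV[C]_n * R) : 'M[C]_n * 'cV[C]_n * R :=
  let: (A, z, t) := g in let: (B, z', t') := h in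
  (A *m B, z + A *m z', t + t' - omega z (A *m z') / 2).

(* mu in P_m : nonincreasing integer sequences *)
Definition dominant m (mu : 'I_m -> int) : Prop :=
  forall i j : 'I_m, (i <= j)%N -> (mu j <= mu i)%R.

(* dominance order on weights: lam <= mu iff mu - lam is a nonnegative
   integer combination of the positive roots e_k - e_(k+1) *)
Definition dom_le m (lam mu : 'I_m -> int) : Prop :=
  (forall k : nat, (k <= m)%N ->
     0 <= \sum_(i < m | (i < k)%N) (mu i - lam i)) /\
  \sum_(i < m) (mu i - lam i) = 0.

Definition torus m (theta : 'I_m -> R) : 'M[C]_m :=
  diag_mx (\row_k expi (theta k)).

Definition weight_vector m d (rho : 'M[C]_m -> 'M[C]_d) (lam : 'I_m -> int)
    (v : 'cV[C]_d) : Prop :=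
  v != 0 /\ forall theta : 'I_m -> R,
    rho (torus theta) *m v = expi (\sum_k (lam k)%:~R * theta k) *: v.

Definition is_weight m d (rho : 'M[C]_m -> 'M[C]_d) lam : Prop :=
  exists v, weight_vector rho lam v.

Definition is_cont_rep m d (rho : 'M[C]_m -> 'M[C]_d) : Prop :=
  rho 1 = 1 /\
  (forall A B, unitary A -> unitary B -> rho (A *m B) = rho A *m rho B) /\
  (forall A, unitary A -> forall eps : R, 0 < eps -> exists2 delta : R, 0 < delta &
     forall A', unitary A' -> (forall i j, `|A' i j - A i j| < complex.real_complex R delta) ->
       forall i j, `|rho A' i j - rho A i j| < complex.real_complex R eps).

(* irreducible: C^d <> 0 and no invariant subspace other than 0 and C^d.
   A subspace is given as the row space of W (vectors written as rows). *)
Definition irreducible_rep m d (rho : 'M[C]_m -> 'M[C]_d) : Prop :=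
  (0 < d)%N /\
  forall W : 'M[C]_d,
    (forall A, unitary A -> (W *m (rho A)^T <= W)%MS) -> W = 0 \/ row_full W.

(* rho is (a realization of) the irreducible representation rho_mu of U(m)
   with highest weight mu *)
Definition is_rho_mu m d (mu : 'I_m -> int) (rho : 'M[C]_m -> 'M[C]_d) : Prop :=
  is_cont_rep rho /\ irreducible_rep rho /\ is_weight rho mu /\
  forall lam, is_weight rho lam -> dom_le lam mu.

(* the representation space: functions xi : U(m+1) -> C^d with
   xi(B diag(C,1)) = rho(C)^{-1} xi(B)   (values off U(m+1) are irrelevant) *)
Definition induced_space m d (rho : 'M[C]_m -> 'M[C]_d)
    (xi : 'M[C]_m.+1 -> 'cV[C]_d) : Prop :=
  forall B Cm, unitary B -> unitary Cm ->
    xi (B *m embed Cm) = invmx (rho Cm) *m xi B.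

Definition pi_rep m d (r : R) (g : 'M[C]_m.+1 * 'cV[C]_m.+1 * R)
    (xi : 'M[C]_m.+1 -> 'cV[C]_d) : 'M[C]_m.+1 -> 'cV[C]_d :=
  fun B => expi (- rdot (B *m vr m r) g.1.2) *: xi (invmx g.1.1 *m B).

Definition dC (g : R -> C) : C :=
  Complex (derive1 (fun h => complex.Re (g h)) 0)
          (derive1 (fun h => complex.Im (g h)) 0).

Definition ej n (j : 'I_n) : 'cV[C]_n := \col_k (if k == j then 1 else 0).

Definition dx n (j : 'I_n) (F : 'cV[C]_n -> R -> C) : 'cV[C]_n -> R -> C :=
  fun z t => dC (fun h => F (z + Complex h 0 *: ej j) t).
Definition dy n (j : 'I_n) (F : 'cV[C]_n -> R -> C) : 'cV[C]_n -> R -> C :=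
  fun z t => dC (fun h => F (z + Complex 0 h *: ej j) t).
Definition dt n (F : 'cV[C]_n -> R -> C) : 'cV[C]_n -> R -> C :=
  fun z t => dC (fun h => F z (t + h)).

Definition dz n j (F : 'cV[C]_n -> R -> C) : 'cV[C]_n -> R -> C :=
  fun z t => (dx j F z t - iC * dy j F z t) / 2.
Definition dzbar n j (F : 'cV[C]_n -> R -> C) : 'cV[C]_n -> R -> C :=
  fun z t => (dx j F z t + iC * dy j F z t) / 2.

Definition Zf n j (F : 'cV[C]_n -> R -> C) : 'cV[C]_n -> R -> C :=
  fun z t => 2 * dzbar j F z t + (iC * z j 0 / 2) * dt F z t.
Definition Zbf n j (F : 'cV[C]_n -> R -> C) : 'cV[C]_n -> R -> C :=
  fun z t => 2 * dz j F z t - (iC * conjc (z j 0) / 2) * dt F z t.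

Definition subL n (F : 'cV[C]_n -> R -> C) : 'cV[C]_n -> R -> C :=
  fun z t => (\sum_(j < n) (Zf j (Zbf j F) z t + Zbf j (Zf j F) z t)) / 2.

(* d pi(L) xi := (L applied to g |-> pi(g) xi) at the identity of H_n,
   computed pointwise in B and coordinatewise in C^d *)
Definition dpiL m d (r : R) (xi : 'M[C]_m.+1 -> 'cV[C]_d) :
    'M[C]_m.+1 -> 'cV[C]_d :=
  fun B => \col_k subL (fun z t => pi_rep r (1%:M, z, t) xi B k 0) 0 0.

End HeisenbergMotion.

From HB Require Import structures.
From mathcomp Require Import all_boot all_order all_algebra.
From mathcomp Require Import complex.
From mathcomp Require Import all_classical all_reals all_analysis.
From mathcomp Require Import ring.
Set Implicit Arguments. Unset Strict Implicit. Unset Printing Implicit Defensive.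
Import Order.TTheory GRing.Theory Num.Theory.
Local Open Scope ring_scope.

(* The Heisenberg part of pi_(mu,r) acts on each value xi(B) by the character
   (z, t) |-> e^{-i(B v_r, z)}, a plane wave in z independent of t.  Each
   Zbar_j and Z_j multiplies a plane wave e^{-i(w,z)} by -i conj(w_j) and
   -i w_j respectively, so L acts by -|w|^2, and |B v_r| = |v_r| = r because B
   is unitary. *)

Section PlaneWaveCalculus.
Variable R : realType.
Local Notation C := R[i].

Lemma is_derive_comp_affine (g : R -> R) (s0 a : R) :
  derivable g s0 1 ->
  is_derive (0 : R) (1 : R) (fun h => g (s0 + a * h)) (a * derive1 g s0).
Proof.
move=> dg.
have affine_eq : (fun h => s0 + a * h) = cst s0 + a \*: id by apply/funext.
have d_affine : is_derive (0 : R) (1 : R) (fun h => s0 + a * h) a.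
  have : is_derive (0 : R) (1 : R) (cst s0 + a \*: id) (0 + a *: (1 : R)).
    exact: is_deriveD.
  by rewrite -affine_eq add0r /GRing.scale /= mulr1.
have affine_derivable : derivable (fun h => s0 + a * h) 0 1 by exact: ex_derive.
have at0 : s0 + a * 0 = s0 by rewrite mulr0 addr0.
apply: DeriveDef.
  apply/derivable1_diffP; apply: differentiable_comp.
    exact/derivable1_diffP.
  by rewrite /= at0; apply/derivable1_diffP.
rewrite -derive1E -/(g \o _) derive1_comp // ?at0 //.
by rewrite mulrC derive1E derive_val.
Qed.

Lemma dC_scale_expi_affine (c : C) (s0 a : R) :
  dC (fun h => c * expi (s0 + a * h)) = c * iC R * real_complex R a * expi s0.
Proof.
have dcos := is_derive_comp_affine a (@derivable_cos R s0).
have dsin := is_derive_comp_affine a (@derivable_sin R s0).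
case: c => p q; rewrite /dC /expi /=.
have -> : (fun h => p * cos (s0 + a * h) - q * sin (s0 + a * h)) =
  p \*: (fun h => cos (s0 + a * h)) - q \*: (fun h => sin (s0 + a * h)).
  by apply/funext.
have -> : (fun h => p * sin (s0 + a * h) + q * cos (s0 + a * h)) =
  p \*: (fun h => sin (s0 + a * h)) + q \*: (fun h => cos (s0 + a * h)).
  by apply/funext.
rewrite !derive1E !derive_val /GRing.scale /= !derive1E !derive_val.
by congr Complex; ring.
Qed.

Lemma hdotDr n (w x y : 'cV[C]_n) : hdot w (x + y) = hdot w x + hdot w y.
Proof.
rewrite /hdot -big_split /=; apply: eq_bigr => k _.
by rewrite mxE rmorphD mulrDr.
Qed.

Lemma hdot_scale_ej n (w : 'cV[C]_n) (c : C) j :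
  hdot w (c *: ej R j) = w j 0 * conjc c.
Proof.
rewrite /hdot (bigD1 j) //= big1 ?addr0; first by rewrite !mxE eqxx mulr1.
by move=> k /negbTE kj; rewrite !mxE kj mulr0 rmorph0 mulr0.
Qed.

Lemma rdot_shift n (w z : 'cV[C]_n) (c : C) j :
  rdot w (z + c *: ej R j) = rdot w z + complex.Re (w j 0 * conjc c).
Proof.
by rewrite /rdot hdotDr hdot_scale_ej; case: (hdot w z) (w j 0 * conjc c) => ? ? [].
Qed.

Definition plane_wave n (w : 'cV[C]_n) (c : C) : 'cV[C]_n -> R -> C :=
  fun z _ => c * expi (- rdot w z).

Lemma plane_wave_at0 n (w : 'cV[C]_n) c t : plane_wave w c 0 t = c.
Proof.
rewrite /plane_wave /rdot /hdot big1 => [|k _]; last by rewrite mxE rmorph0 mulr0.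
by rewrite /= oppr0 /expi cos0 sin0 mulr1.
Qed.

Lemma dx_plane_wave n (w : 'cV[C]_n) c j :
  dx j (plane_wave w c) =
  plane_wave w (c * iC R * real_complex R (- complex.Re (w j 0))).
Proof.
apply/funext => z; apply/funext => t; rewrite /dx /plane_wave -dC_scale_expi_affine.
congr dC; apply/funext => h; rewrite rdot_shift opprD.
by case: (w j 0) => a b; congr (_ * expi (_ + _)) => /=; ring.
Qed.

Lemma dy_plane_wave n (w : 'cV[C]_n) c j :
  dy j (plane_wave w c) =
  plane_wave w (c * iC R * real_complex R (- complex.Im (w j 0))).
Proof.
apply/funext => z; apply/funext => t; rewrite /dy /plane_wave -dC_scale_expi_affine.
congr dC; apply/funext => h; rewrite rdot_shift opprD.
by case: (w j 0) => a b; congr (_ * expi (_ + _)) => /=; ring.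
Qed.

Lemma dt_plane_wave n (w : 'cV[C]_n) c z t : dt (plane_wave w c) z t = 0.
Proof. by rewrite /dt /dC !derive1_cst. Qed.

Lemma Zbf_plane_wave n (w : 'cV[C]_n) c j :
  Zbf j (plane_wave w c) = plane_wave w (- iC R * conjc (w j 0) * c).
Proof.
apply/funext => z; apply/funext => t.
rewrite /Zbf dt_plane_wave /dz dx_plane_wave dy_plane_wave /plane_wave mulr0 subr0.
rewrite [2 * _]mulrC divfK //.
case: (w j 0) => a b; case: c => p q; case: (expi _) => u v /=.
by congr Complex; ring.
Qed.

Lemma Zf_plane_wave n (w : 'cV[C]_n) c j :
  Zf j (plane_wave w c) = plane_wave w (- iC R * w j 0 * c).
Proof.
apply/funext => z; apply/funext => t.
rewrite /Zf dt_plane_wave /dzbar dx_plane_wave dy_plane_wave /plane_wave mulr0 addr0.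
rewrite [2 * _]mulrC divfK //.
case: (w j 0) => a b; case: c => p q; case: (expi _) => u v /=.
by congr Complex; ring.
Qed.

Lemma subL_plane_wave n (w : 'cV[C]_n) c z t :
  subL (plane_wave w c) z t = - hdot w w * plane_wave w c z t.
Proof.
rewrite /subL.
under eq_bigr do rewrite Zbf_plane_wave Zf_plane_wave Zf_plane_wave Zbf_plane_wave.
transitivity ((\sum_j - (w j 0 * conjc (w j 0)) * plane_wave w c z t) * 2 / 2).
  congr (_ / _); rewrite mulr_suml; apply: eq_bigr => j _; rewrite /plane_wave.
  case: (w j 0) => a b; case: c => p q; case: (expi _) => u v /=.
  by congr Complex; ring.
by rewrite mulfK // -mulr_suml sumrN.
Qed.

Lemma hdot_mx n (x y : 'cV[C]_n) : hdot x y = (map_mx conjc y^T *m x) 0 0.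
Proof. by rewrite /hdot mxE; apply: eq_bigr => j _; rewrite !mxE mulrC. Qed.

Lemma unitary_hdot n (B : 'M[C]_n) (x y : 'cV[C]_n) :
  unitary B -> hdot (B *m x) (B *m y) = hdot x y.
Proof.
move=> UB; rewrite !hdot_mx trmx_mul map_mxM.
by rewrite -mulmxA (mulmxA (map_mx conjc B^T)) -/(adjmx B) UB mul1mx.
Qed.

Lemma hdot_vr m (r : R) : hdot (vr m r) (vr m r) = real_complex R (r ^+ 2).
Proof.
rewrite /hdot (bigD1 ord_max) //= big1 ?addr0.
  by rewrite !mxE eqxx /=; congr Complex; ring.
by move=> k /negbTE kj; rewrite !mxE kj mul0r.
Qed.

End PlaneWaveCalculus.

Theorem lemma5p1 (R : realType) (m d : nat) (r : R) (mu : 'I_m -> int)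
    (rho : 'M[R[i]]_m -> 'M[R[i]]_d) :
  0 < r -> dominant mu -> is_rho_mu mu rho ->
  forall xi : 'M[R[i]]_m.+1 -> 'cV[R[i]]_d, induced_space rho xi ->
  forall B : 'M[R[i]]_m.+1, unitary B ->
    dpiL r xi B = (- complex.real_complex R (r ^+ 2)) *: xi B.
Proof.
move=> _ _ _ xi _ B UB.
apply/matrixP => k l; rewrite (ord1 l) !mxE.
have -> : (fun z t => pi_rep r (1%:M, z, t) xi B k 0) =
          plane_wave (B *m vr m r) (xi B k 0).
  apply/funext => z; apply/funext => t.
  by rewrite /pi_rep /plane_wave /= mxE invmx1 mul1mx mulrC.
by rewrite subL_plane_wave plane_wave_at0 unitary_hdot // hdot_vr.
Qed.
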